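(* Let $X$ be a nonempty set and let $\mathcal{S}_1,\mathcal{S}_2\subseteq\mathcal{P}(X)$ with $\emptyset\in\mathcal{S}_1$ and $\emptyset\in\mathcal{S}_2$. Define $\mathcal{S}_1\cup^{\star}\mathcal{S}_2=\{S_1\cup S_2 : S_1\in\mathcal{S}_1,\ S_2\in\mathcal{S}_2\}$. Then $\triangleleft_{\mathcal{S}_1\cup^{\star}\mathcal{S}_2}=\triangleleft_{\mathcal{S}_1}\cup\triangleleft_{\mathcal{S}_2}$ (as subsets of $X\times X$).
   Context: For $\mathcal{S}\subseteq\mathcal{P}(X)$, $\triangleleft_{\mathcal{S}}$ is the relation $\{(x,y)\in X\times X : \exists S\in\mathcal{S},\ x\in S,\ y\notin S\}$. *)

Definition sep_rel {X : Type} (F : (X -> Prop) -> Prop) (x y : X) : Prop :=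
  exists S, F S /\ S x /\ ~ S y.

Definition set_union {X : Type} (A B : X -> Prop) : X -> Prop :=
  fun x => A x \/ B x.

Definition set_empty {X : Type} : X -> Prop := fun _ => False.

Definition star_union {X : Type} (F1 F2 : (X -> Prop) -> Prop) : (X -> Prop) -> Prop :=
  fun S => exists S1 S2, F1 S1 /\ F2 S2 /\ (forall x, S x <-> set_union S1 S2 x).

Definition has_empty {X : Type} (F : (X -> Prop) -> Prop) : Prop :=
  exists E, F E /\ forall x, ~ E x.


(* A set separating x from y in S1 ∪* S2 is a union S1 ∪ S2 containing x but
   not y, so one of S1, S2 already separates x from y.  Conversely, since each
   family contains the empty set, each family embeds in S1 ∪* S2 via
   S ↦ S ∪ ∅, and separation is monotone in the family. *)

Section SepRel.

Variable X : Type.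
Implicit Types (F G : (X -> Prop) -> Prop) (S : X -> Prop) (x y : X).

Lemma sep_rel_mono F G x y :
  (forall S, F S -> G S) -> sep_rel F x y -> sep_rel G x y.
Proof.
  intros FG [S [FS [Sx nSy]]].
  exists S; auto.
Qed.

Lemma star_union_comm F1 F2 S : star_union F1 F2 S -> star_union F2 F1 S.
Proof.
  intros [S1 [S2 [F1S1 [F2S2 HS]]]].
  exists S2, S1; split; [|split]; auto.
  intros x; specialize (HS x); unfold set_union in *; tauto.
Qed.

Lemma sub_star_union_l F1 F2 S :
  has_empty F2 -> F1 S -> star_union F1 F2 S.
Proof.
  intros [E [F2E noE]] F1S.
  exists S, E; split; [|split]; auto.
  intros x; unfold set_union; specialize (noE x); tauto.
Qed.

Lemma sub_star_union_r F1 F2 S :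
  has_empty F1 -> F2 S -> star_union F1 F2 S.
Proof.
  intros hF1 F2S.
  apply star_union_comm, sub_star_union_l; assumption.
Qed.

Lemma sep_rel_star_union_split F1 F2 x y :
  sep_rel (star_union F1 F2) x y -> sep_rel F1 x y \/ sep_rel F2 x y.
Proof.
  intros [S [[S1 [S2 [F1S1 [F2S2 HS]]]] [Sx nSy]]].
  apply HS in Sx; destruct Sx as [S1x | S2x].
  - left; exists S1; split; [|split]; auto.
    intros S1y; apply nSy, HS; left; exact S1y.
  - right; exists S2; split; [|split]; auto.
    intros S2y; apply nSy, HS; right; exact S2y.
Qed.

End SepRel.

Theorem proposition2p3 (X : Type) (x0 : X) (F1 F2 : (X -> Prop) -> Prop)
  (h1 : has_empty F1) (h2 : has_empty F2) :
  forall x y : X,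
    sep_rel (star_union F1 F2) x y <-> (sep_rel F1 x y \/ sep_rel F2 x y).
Proof.
  intros x y; split.
  - apply sep_rel_star_union_split.
  - intros [sep1 | sep2].
    + apply (sep_rel_mono _ F1); [intros S; apply sub_star_union_l|]; assumption.
    + apply (sep_rel_mono _ F2); [intros S; apply sub_star_union_r|]; assumption.
Qed.
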